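(* Let $m\in[1..\frac n2-1]$ and let $\tau=(\tau_i)_{i\in[1..n]}\in\{\frac1n,\frac12,1-\frac1n\}^n$. Let $x,y\in\{0,1\}^n$ be sampled independently from the distribution associated with $\tau$, and let $z$ be the winner of $x$ and $y$ with respect to $\mathrm{DLB}$ (the one with larger $\mathrm{DLB}$-value, chosen uniformly at random among the two in case of a tie). Then, conditioned on $\{\min\{\mathrm{DLB}(x),\mathrm{DLB}(y)\}\ge 2m\}$, we have $z_{2m+1}=1$ with probability $$p(\tau_{2m+1},\tau_{2m+2})=\tau_{2m+1}\left(-\tau_{2m+2}^2+3\tau_{2m+2}+(\tau_{2m+2}^2-3\tau_{2m+2}+1)\tau_{2m+1}\right).$$ If $\tau_{2m+1},\tau_{2m+2}\in\{\frac12,1-\frac1n\}$, then $p(\tau_{2m+1},\tau_{2m+2})\ge\tau_{2m+1}$. If moreover $\tau_{2m+1}=\frac12$ and $\tau_{2m+2}\in\{\frac12,1-\frac1n\}$, then $p(\tau_{2m+1},\tau_{2m+2})\ge\frac9{16}$.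
   Context: Let $n$ be an even positive integer. For $x\in\{0,1\}^n$ consider the blocks $(x_{2\ell+1},x_{2\ell+2})$, $\ell=0,\dots,\frac n2-1$. If $x\neq(1,\dots,1)$, let $m$ be the smallest $\ell$ with $x_{2\ell+1}\neq 1$ or $x_{2\ell+2}\neq 1$, and define $\mathrm{DLB}(x)=2m+1$ if $x_{2m+1}+x_{2m+2}=0$ and $\mathrm{DLB}(x)=2m$ if $x_{2m+1}+x_{2m+2}=1$; set $\mathrm{DLB}(1,\dots,1)=n$. The distribution on $\{0,1\}^n$ associated with a frequency vector $\tau\in[0,1]^n$ is the one in which each bit $x_i$ is independently $1$ with probability $\tau_i$ and $0$ otherwise. *)

(* Bit strings x in {0,1}^n are n.-tuple bool; paper index i (1-based)
   corresponds to tuple position i-1 (0-based). *)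
From HB Require Import structures.
From mathcomp Require Import all_boot all_order all_algebra.
Set Implicit Arguments. Unset Strict Implicit. Unset Printing Implicit Defensive.
Import Order.TTheory GRing.Theory Num.Theory.

Definition bit n (x : n.-tuple bool) (k : nat) : bool := nth false x k.

(* Blocks l = 0..n/2-1 consist of paper positions (2l+1, 2l+2), i.e. 0-based (2l, 2l+1). *)
Definition nonfull_blocks n (x : n.-tuple bool) : seq nat :=
  [seq l <- iota 0 n./2 | ~~ (bit x (2 * l) && bit x (2 * l).+1)].

Definition DLB n (x : n.-tuple bool) : nat :=
  match nonfull_blocks x with
  | [::] => n
  | m :: _ => if ~~ bit x (2 * m) && ~~ bit x (2 * m).+1 then (2 * m).+1 else 2 * m
  end.

Local Open Scope ring_scope.

Definition probx (R : comPzRingType) n (tau : nat -> R) (x : n.-tuple bool) : R :=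
  \prod_(i < n) (if tnth x i then tau i else 1 - tau i).

Definition winner_bit (R : fieldType) n (x y : n.-tuple bool) (k : nat) : R :=
  if (DLB y < DLB x)%N then (bit x k)%:R
  else if (DLB x < DLB y)%N then (bit y k)%:R
  else ((bit x k)%:R + (bit y k)%:R) / 2.

Definition cond_prob_winner_bit (R : fieldType) n (tau : nat -> R) (b k : nat) : R :=
  (\sum_(x : n.-tuple bool) \sum_(y : n.-tuple bool)
      if (b <= minn (DLB x) (DLB y))%N then probx tau x * probx tau y * winner_bit R x y k
      else 0) /
  (\sum_(x : n.-tuple bool) \sum_(y : n.-tuple bool)
      if (b <= minn (DLB x) (DLB y))%N then probx tau x * probx tau y else 0).

Definition pfun (R : comPzRingType) (a b : R) : R :=
  a * (- b ^+ 2 + 3 * b + (b ^+ 2 - 3 * b + 1) * a).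

From mathcomp Require Import all_boot all_order all_algebra ring lra zify.
Import Order.TTheory GRing.Theory Num.Theory.
Set Implicit Arguments. Unset Strict Implicit. Unset Printing Implicit Defensive.

(** min(DLB x, DLB y) >= 2m holds exactly when the first m blocks of x and of y
   are all ones.  On that event the winner's bit 2m+1 depends only on block m of
   x and of y, ranked (1,1) > (0,0) > mixed, and under the product distribution
   these two blocks are independent of the prefixes.  Conditioning thus cancels
   the prefix probability, and the conditional probability is an explicit
   polynomial in the two frequencies of block m, namely p.  The inequalities
   follow from p(a,b) = a + a(1-a)(3b - b^2 - 1) and p(1/2,b) = (1 + 3b - b^2)/4. *)

Definition block_rank (u : bool * bool) : nat :=
  if u.1 && u.2 then 2 else if ~~ u.1 && ~~ u.2 then 1 else 0.

Lemma block_rank_full u : (2 <= block_rank u) = u.1 && u.2.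
Proof. by case: u => [[] []]. Qed.

Section Blocks.
Variables (n m : nat).
Implicit Types x y : n.-tuple bool.

Definition full_block x l := bit x (2 * l) && bit x (2 * l).+1.
Definition prefix_ones x := all (full_block x) (iota 0 m).
Definition block x := (bit x (2 * m), bit x (2 * m).+1).

Lemma prefix_onesP x : reflect (forall i, (i < 2 * m)%N -> bit x i) (prefix_ones x).
Proof.
apply: (iffP allP) => [full i lt_i_2m | ones l].
  have /andP[bit_even bit_odd] : full_block x i./2 by apply: full; rewrite mem_iota; lia.
  have [-> | ->] // : i = 2 * i./2 \/ i = (2 * i./2).+1.
  by have := odd_double_half i; case: (odd i) => /=; lia.
rewrite mem_iota => /andP[_ lt_l_m]; apply/andP; split; apply: ones; lia.
Qed.

Lemma prefix_ones_nonfull_blocks x :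
  prefix_ones x -> [seq l <- iota 0 m | ~~ full_block x l] = [::].
Proof. by move=> ones; apply/eqP; rewrite -[_ == _]negbK -has_filter has_predC negbK. Qed.

Lemma nonfull_blocksE x : (m <= n./2)%N ->
  nonfull_blocks x = [seq l <- iota 0 m | ~~ full_block x l]
                     ++ [seq l <- iota m (n./2 - m) | ~~ full_block x l].
Proof. by move=> le_m_half; rewrite /nonfull_blocks -filter_cat -iotaD subnKC. Qed.

Lemma DLB_lt_double x : (m <= n./2)%N -> ~~ prefix_ones x -> (DLB x < 2 * m)%N.
Proof.
move=> le_m_half not_ones.
have : [seq l <- iota 0 m | ~~ full_block x l] != [::] by rewrite -has_filter has_predC.
rewrite /DLB nonfull_blocksE //.
case E : [seq l <- iota 0 m | _] => [|l s] //= _.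
have : l \in iota 0 m by have := mem_head l s; rewrite -E mem_filter => /andP[].
by rewrite mem_iota; case: ifP; lia.
Qed.

Lemma DLB_geq_double x : (m <= n./2)%N -> prefix_ones x -> (2 * m <= DLB x)%N.
Proof.
move=> le_m_half ones; rewrite /DLB nonfull_blocksE // prefix_ones_nonfull_blocks //.
case E : [seq l <- _ | _] => [|l s] //=; first lia.
have : l \in iota m (n./2 - m) by have := mem_head l s; rewrite -E mem_filter => /andP[].
by rewrite mem_iota; case: ifP; lia.
Qed.

Lemma double_leq_DLB x : (m <= n./2)%N -> (2 * m <= DLB x)%N = prefix_ones x.
Proof.
move=> le_m_half; apply/idP/idP => [|/DLB_geq_double]; last exact.
by apply: contraLR; rewrite -ltnNge; apply: DLB_lt_double.
Qed.

Lemma DLB_prefix_ones x : (m < n./2)%N -> prefix_ones x ->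
  minn (DLB x) (2 * m).+2 = (2 * m + block_rank (block x))%N.
Proof.
move=> lt_m_half ones; rewrite /DLB nonfull_blocksE 1?ltnW // prefix_ones_nonfull_blocks //=.
rewrite -(subnSK lt_m_half) /= /block /block_rank /full_block.
case: ifP => [nonfull | /negbFE/andP[-> ->]] /=.
  by case: (bit x (2 * m)) (bit x (2 * m).+1) nonfull => [] [] //= _; lia.
case E : [seq l <- _ | _] => [|l s] /=; first lia.
have : l \in iota m.+1 (n./2 - m.+1) by have := mem_head l s; rewrite -E mem_filter => /andP[].
by rewrite mem_iota; case: ifP; lia.
Qed.
End Blocks.

Local Open Scope ring_scope.

Definition bit_prob (R : comPzRingType) (b : bool) (p : R) : R := if b then p else 1 - p.

Definition block_prob (R : comPzRingType) (a b : R) (u : bool * bool) : R :=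
  bit_prob u.1 a * bit_prob u.2 b.

Lemma sum_bool_pair (R : nmodType) (F : bool * bool -> R) :
  \sum_u F u = F (true, true) + F (true, false) + (F (false, true) + F (false, false)).
Proof.
rewrite (eq_bigr (fun u => F (u.1, u.2))) => [|[] //].
by rewrite -(pair_bigA _ (fun s t => F (s, t))) /= !big_bool.
Qed.

Lemma sum_bit_prob (R : comPzRingType) (p : R) : \sum_(b : bool) bit_prob b p = 1.
Proof. by rewrite big_bool /= addrC subrK. Qed.

Lemma sum_block_prob (R : comPzRingType) (a b : R) : \sum_u block_prob a b u = 1.
Proof.
rewrite /block_prob -(pair_bigA _ (fun s t => bit_prob s a * bit_prob t b)) /=.
by rewrite -big_distrlr /= !sum_bit_prob mulr1.
Qed.

Lemma sum_probx_cylinder (R : comPzRingType) n (tau : nat -> R) (P : 'I_n -> pred bool) :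
  \sum_(x : n.-tuple bool | [forall i, P i (tnth x i)]) probx tau x
  = \prod_(i < n) \sum_(b | P i b) bit_prob b (tau i).
Proof.
rewrite bigA_distr_big_dep (reindex (fun f : {ffun 'I_n -> bool} => [tuple f i | i < n])).
  apply: eq_big => [f | f _]; last by apply: eq_bigr => i _; rewrite tnth_mktuple.
  by apply/forallP/familyP => /= fP i; move: (fP i); rewrite tnth_mktuple.
apply: onW_bij; exists (fun x : n.-tuple bool => [ffun i => tnth x i]) => [f | x].
  by apply/ffunP => i; rewrite ffunE tnth_mktuple.
by apply: eq_from_tnth => i; rewrite tnth_mktuple ffunE.
Qed.

Definition block_winner_bit (R : numFieldType) (u v : bool * bool) : R :=
  if (block_rank v < block_rank u)%N then (u.1 : nat)%:R
  else if (block_rank u < block_rank v)%N then (v.1 : nat)%:R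
  else ((u.1 : nat)%:R + (v.1 : nat)%:R) / 2.

Lemma winner_bit_block (R : numFieldType) n m (x y : n.-tuple bool) : (m < n./2)%N ->
  prefix_ones m x -> prefix_ones m y ->
  winner_bit R x y (2 * m)%N = block_winner_bit R (block m x) (block m y).
Proof.
move=> lt_m_half /(DLB_prefix_ones lt_m_half) DLBx /(DLB_prefix_ones lt_m_half) DLBy.
rewrite /winner_bit /block_winner_bit.
case: (ltngtP (block_rank (block m y)) (block_rank (block m x)))
  => [rank_lt | rank_gt | rank_eq].
- by rewrite ifT //; lia.
- by rewrite ifF ?ifT //; lia.
(* Equal ranks but distinct DLB values occur only when both blocks are (1,1),
   so that both candidate bits are 1. *)
case: (ltngtP (DLB y) (DLB x)) => [DLB_lt | DLB_gt | //].
all: have : (2 <= block_rank (block m x))%N && (2 <= block_rank (block m y))%N by lia.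
all: rewrite !block_rank_full /= => /andP[/andP[-> _] /andP[-> _]].
all: by rewrite /= mulr1n -mulr2n divff // pnatr_eq0.
Qed.

Section PrefixSums.
Variables (n m : nat) (R : comPzRingType) (tau : nat -> R).
Hypothesis lt_m_half : (m < n./2)%N.

Definition prefix_block_cylinder (u : bool * bool) (i : nat) (b : bool) : bool :=
  if (i < 2 * m)%N then b
  else if i == (2 * m)%N then b == u.1
  else if i == (2 * m).+1 then b == u.2
  else true.

Lemma prefix_block_cylinderE (x : n.-tuple bool) u :
  prefix_ones m x && (block m x == u)
  = [forall i : 'I_n, prefix_block_cylinder u i (tnth x i)].
Proof.
have lt_2m1_n : ((2 * m).+1 < n)%N by lia.
apply/andP/forallP => [[/prefix_onesP ones /eqP <-] i | cyl].
  rewrite /prefix_block_cylinder (tnth_nth false) -/(bit x i).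
  by case: ifP => [/ones // | _]; do 2![case: eqP => [-> // | _]].
split.
  apply/prefix_onesP => i lt_i_2m; have := cyl (Ordinal (ltn_trans lt_i_2m (ltnW lt_2m1_n))).
  by rewrite /prefix_block_cylinder /= lt_i_2m (tnth_nth false).
have := cyl (Ordinal lt_2m1_n).
rewrite /prefix_block_cylinder /= ltnNge leqnSn gtn_eqF // eqxx (tnth_nth false) => /eqP bit_2m1.
have := cyl (Ordinal (ltnW lt_2m1_n)).
rewrite /prefix_block_cylinder /= ltnn eqxx (tnth_nth false) => /eqP bit_2m.
by apply/eqP; rewrite /block /bit bit_2m bit_2m1 -surjective_pairing.
Qed.

Lemma sum_probx_prefix_block u :
  \sum_(x : n.-tuple bool | prefix_ones m x && (block m x == u)) probx tau x
  = \prod_(i < 2 * m) tau i * block_prob (tau (2 * m)%N) (tau (2 * m).+1) u.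
Proof.
pose factor i := if (i < 2 * m)%N then tau i
  else if i == (2 * m)%N then bit_prob u.1 (tau i)
  else if i == (2 * m).+1 then bit_prob u.2 (tau i) else 1.
have factorE (i : 'I_n) :
    \sum_(b | prefix_block_cylinder u i b) bit_prob b (tau i) = factor i.
  rewrite /prefix_block_cylinder /factor; case: ifP => _.
    by rewrite big_mkcond big_bool /= addr0.
  case: eqP => _; first by rewrite big_pred1_eq.
  by case: eqP => _; rewrite ?big_pred1_eq ?sum_bit_prob.
rewrite (eq_bigl _ _ (prefix_block_cylinderE ^~ u)).
rewrite (sum_probx_cylinder tau (fun i : 'I_n => prefix_block_cylinder u i)).
rewrite (eq_bigr _ (fun i _ => factorE i)) -(big_mkord xpredT factor).
rewrite (big_cat_nat (n := (2 * m).+2)) //=; last by lia.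
rewrite [X in _ * X]big1_seq => [|i /andP[_]]; last first.
  by rewrite mem_index_iota /factor => /andP[le_i lt_i]; rewrite !ifF //; lia.
rewrite mulr1 !big_nat_recr //= /factor ltnn !eqxx ltnNge leqnSn gtn_eqF //.
by rewrite big_mkord -mulrA; congr (_ * _); apply: eq_bigr => i _; rewrite ltn_ord.
Qed.

Lemma sum_prefix_ones_block (F : bool * bool -> R) :
  \sum_(x : n.-tuple bool | prefix_ones m x) probx tau x * F (block m x)
  = \prod_(i < 2 * m) tau i
    * \sum_u block_prob (tau (2 * m)%N) (tau (2 * m).+1) u * F u.
Proof.
rewrite (partition_big (block m) xpredT) //= mulr_sumr; apply: eq_bigr => u _.
rewrite (eq_bigr (fun x => probx tau x * F u)) => [|x /andP[_ /eqP -> //]].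
by rewrite -mulr_suml sum_probx_prefix_block mulrA.
Qed.

Lemma sum_probx_prefix_ones :
  \sum_(x : n.-tuple bool | prefix_ones m x) probx tau x = \prod_(i < 2 * m) tau i.
Proof.
under eq_bigr do rewrite -[probx tau _]mulr1.
rewrite (sum_prefix_ones_block (fun _ => 1)).
by rewrite (eq_bigr _ (fun u _ => mulr1 _)) sum_block_prob mulr1.
Qed.
End PrefixSums.

Lemma sum_min_DLB_geq_double (R : nmodType) n m (F : n.-tuple bool -> n.-tuple bool -> R) :
  (m <= n./2)%N ->
  \sum_x \sum_y (if (2 * m <= minn (DLB x) (DLB y))%N then F x y else 0)
  = \sum_(x | prefix_ones m x) \sum_(y | prefix_ones m y) F x y.
Proof.
move=> le_m_half; rewrite [RHS]big_mkcond; apply: eq_bigr => x _.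
have [ones_x | /negbTE not_ones_x] := boolP (prefix_ones m x).
  rewrite [RHS]big_mkcond; apply: eq_bigr => y _.
  by rewrite leq_min !double_leq_DLB // ones_x.
by rewrite big1 // => y _; rewrite leq_min double_leq_DLB // not_ones_x.
Qed.

Lemma expected_block_winner_bit (R : numFieldType) (a b : R) :
  \sum_u \sum_v block_prob a b u * block_prob a b v * block_winner_bit R u v = pfun a b.
Proof.
rewrite !sum_bool_pair /block_prob /block_winner_bit /bit_prob /pfun /=.
by field.
Qed.

Lemma cond_prob_winner_bit_block (R : numFieldType) n m (tau : nat -> R) :
  (m < n./2)%N -> (forall i, (i < 2 * m)%N -> tau i != 0) ->
  cond_prob_winner_bit n tau (2 * m)%N (2 * m)%N = pfun (tau (2 * m)%N) (tau (2 * m).+1).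
Proof.
move=> lt_m_half tau_neq0.
set T := \prod_(i < 2 * m) tau i; set W := block_prob (tau (2 * m)%N) (tau (2 * m).+1).
have T_neq0 : T != 0 by apply/prodf_neq0 => i _; apply: tau_neq0.
have numE : \sum_(x : n.-tuple bool | prefix_ones m x) \sum_(y | prefix_ones m y)
    probx tau x * probx tau y * winner_bit R x y (2 * m)%N
  = T * T * \sum_u \sum_v W u * W v * block_winner_bit R u v.
  under eq_bigr => x ones_x do under eq_bigr => y ones_y do
    rewrite winner_bit_block // -mulrA.
  under eq_bigr => x _ do
    rewrite -mulr_sumr (sum_prefix_ones_block tau lt_m_half (block_winner_bit R (block m x))).
  rewrite (sum_prefix_ones_block tau lt_m_half
             (fun u => T * \sum_v W v * block_winner_bit R u v)).
  rewrite -mulrA; congr (_ * _); rewrite mulr_sumr; apply: eq_bigr => u _.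
  by rewrite mulrCA mulr_sumr; congr (_ * _); apply: eq_bigr => v _; rewrite mulrA.
have denE : \sum_(x : n.-tuple bool | prefix_ones m x)
    \sum_(y : n.-tuple bool | prefix_ones m y) probx tau x * probx tau y = T * T.
  by rewrite -[T](sum_probx_prefix_ones tau lt_m_half) big_distrlr.
rewrite /cond_prob_winner_bit !sum_min_DLB_geq_double 1?ltnW // numE denE.
by rewrite mulrC mulKf ?mulf_neq0 // expected_block_winner_bit.
Qed.

Lemma pfun_ge_left (R : realFieldType) (a b : R) :
  0 <= a <= 1 -> 2^-1 <= b <= 1 -> a <= pfun a b.
Proof.
move=> /andP[a_ge0 a_le1] /andP[b_ge b_le1].
have -> : pfun a b = a + a * (1 - a) * (- b ^+ 2 + 3 * b - 1) by rewrite /pfun; ring.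
rewrite lerDl mulr_ge0 ?mulr_ge0 ?subr_ge0 //; nra.
Qed.

Lemma pfun_half_ge (R : realFieldType) (b : R) : 2^-1 <= b <= 1 -> 9 / 16 <= pfun 2^-1 b.
Proof.
move=> /andP[b_ge b_le1].
have -> : pfun 2^-1 b = (1 + 3 * b - b ^+ 2) / 4 by rewrite /pfun; field.
nra.
Qed.

Theorem lemma21 (R : realFieldType) (n m : nat) (tau : nat -> R) :
  ~~ odd n -> (1 <= m)%N -> (m <= n./2 - 1)%N ->
  (forall i, (i < n)%N -> tau i \in [:: n%:R^-1; 2^-1; 1 - n%:R^-1]) ->
  [/\ cond_prob_winner_bit n tau (2 * m)%N (2 * m)%N = pfun (tau (2 * m)%N) (tau (2 * m).+1),
      tau (2 * m)%N \in [:: 2^-1; 1 - n%:R^-1] -> tau (2 * m).+1 \in [:: 2^-1; 1 - n%:R^-1] ->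
        tau (2 * m)%N <= pfun (tau (2 * m)%N) (tau (2 * m).+1)
    & tau (2 * m)%N = 2^-1 -> tau (2 * m).+1 \in [:: 2^-1; 1 - n%:R^-1] ->
        9 / 16 <= pfun (tau (2 * m)%N) (tau (2 * m).+1)].
Proof.
move=> _ m_ge1 m_le tau_in.
have lt_m_half : (m < n./2)%N by lia.
have [inv_n_gt0 inv_n_le_half] : 0 < n%:R^-1 :> R /\ n%:R^-1 <= 2^-1 :> R.
  have n_ge2 : (2 <= n)%N by lia.
  have n_gt0 : (0 < n)%N by lia.
  by rewrite invr_gt0 ltr0n lef_pV2 ?posrE ?ltr0n ?ler_nat.
have bounds (b : R) : b \in [:: 2^-1; 1 - n%:R^-1] -> 2^-1 <= b <= 1.
  by rewrite !inE => /orP[] /eqP ->; apply/andP; split; lra.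
split.
- apply: cond_prob_winner_bit_block => // i lt_i_2m.
  have : tau i \in [:: n%:R^-1; 2^-1; 1 - n%:R^-1] by apply: tau_in; lia.
  by rewrite !inE => /or3P[] /eqP ->; rewrite gt_eqF //; lra.
- move=> /bounds /andP[a_ge a_le1] /bounds b_bounds.
  by apply: pfun_ge_left => //; apply/andP; split; lra.
- by move=> -> /bounds; apply: pfun_half_ge.
Qed.
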